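(* Let $\alpha>1$ and constants $0<c\le C$ and $c_0>0$. Consider, for each $N\ge2$, a number of tasks $K=K(N)\ge c_0N$ and test proportions ${\bm{p}}={\bm{p}}^{(N)}\in\Delta_K$ with $c\,k^{-\alpha}\le p_k\le C\,k^{-\alpha}$ for all $k\le K$. For the memorization model with $L_N({\bm{p}},{\bm{q}})=\sum_{k=1}^K p_k(1-q_k)^N$, $L^{\mathrm{same}}({\bm{p}})=L_N({\bm{p}},{\bm{p}})$ and $L^*({\bm{p}})=\min_{{\bm{q}}\in\Delta_K}L_N({\bm{p}},{\bm{q}})$, we have, as $N\to\infty$, $$L^{\mathrm{same}}({\bm{p}})=\Theta\!\left(N^{-1+\frac{1}{\alpha}}\right),\qquad L^*({\bm{p}})=\Theta\!\left(N^{-\alpha+1}\right),$$ where the implied constants depend only on $\alpha,c,C,c_0$.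
   Context: $\Delta_K=\{{\bm{r}}\in\mathbb{R}^K:{\bm{r}}\ge0,\ \sum_k r_k=1\}$. Memorization model: each of $K$ tasks is memorizing a unique atom; the test distribution is the mixture of the tasks with proportions ${\bm{p}}$; training uses $N$ i.i.d. samples from the mixture with proportions ${\bm{q}}$, and the error on task $k$ is $1$ if no training example from task $k$ was seen and $0$ otherwise, giving the expected test loss $L_N({\bm{p}},{\bm{q}})=\sum_k p_k(1-q_k)^N$. The paper states the hypotheses as $p_k=\Theta(k^{-\alpha})$ and $K=\Omega(N)$. *)

From mathcomp Require Import all_boot all_order all_algebra.
From mathcomp Require Import all_classical all_reals all_analysis.
Set Implicit Arguments. Unset Strict Implicit. Unset Printing Implicit Defensive.
Import Order.TTheory GRing.Theory Num.Theory.
Local Open Scope ring_scope.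
Local Open Scope classical_set_scope.

(* Tasks are indexed by i : 'I_K, standing for task k = i+1 in {1,...,K}. *)

Definition simplex (R : realType) (K : nat) : set ('I_K -> R) :=
  [set r | (forall i, 0 <= r i) /\ \sum_(i < K) r i = 1].

Definition LN (R : realType) (N K : nat) (p q : 'I_K -> R) : R :=
  \sum_(i < K) p i * (1 - q i) ^+ N.

Definition Lsame (R : realType) (N K : nat) (p : 'I_K -> R) : R := LN N p p.

(* L^*(p) = min_{q in Delta_K} L_N(p,q)  (the minimum is attained; we use inf). *)
Definition Lstar (R : realType) (N K : nat) (p : 'I_K -> R) : R :=
  inf [set LN N p q | q in @simplex R K].

From mathcomp Require Import all_boot all_order all_algebra.
From mathcomp Require Import all_classical all_reals all_analysis.
From mathcomp Require Import ring lra.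
Set Implicit Arguments. Unset Strict Implicit. Unset Printing Implicit Defensive.
Import Order.TTheory GRing.Theory Num.Theory.
Local Open Scope ring_scope.
Local Open Scope classical_set_scope.

(* Both losses are sums of terms [p_k (1 - q_k) ^ N ~ p_k exp (- N q_k)].  For [q = p] a
   task is essentially never forgotten once [p_k >> 1 / N], i.e. for [k << N ^ (1 / alpha)]:
   bounding the head by [1 / N] per task and the tail by [sum_(k >= m) k ^ (- alpha)
   ~ m ^ (1 - alpha)] at [m ~ N ^ (1 / alpha)] gives [N ^ (-1 + 1 / alpha)] from above, and
   the window [m <= k < 2m] gives it from below.  For the best [q], spending
   [q_k = alpha / N * ln (m / k)] on the [m ~ N / alpha] most frequent tasks flattens their
   losses to [C m ^ (- alpha)], whence [L* = O (N ^ (1 - alpha))]; conversely, any [q] in the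
   simplex has [q_k <= 2 / N] for at least half of the first [~ N] tasks, each of which keeps
   a constant fraction of [p_k >= c N ^ (- alpha)]. *)

Section RealFacts.
Variable R : realType.
Implicit Types (x y r : R) (a b m n K : nat).

Lemma onemX_le_expR x n : x <= 1 -> (1 - x) ^+ n <= expR (- (n%:R * x)).
Proof.
move=> x_le1; rewrite -mulrN expRM_natl.
by apply: lerXn2r; rewrite ?nnegrE ?subr_ge0 ?expR_ge0 ?expR_ge1Dx.
Qed.

Lemma expR_le_onemX x n : 0 <= x <= 2^-1 -> expR (- (2 * n%:R * x)) <= (1 - x) ^+ n.
Proof.
move=> /andP[x_ge0 x_le2]; have onemx_gt0 : 0 < 1 - x by lra.
(* [1 + y <= expR y] at [y = x / (1 - x) <= 2 x] *)
have expR_le_onemx : expR (- (2 * x)) <= 1 - x.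
  have y_le : x / (1 - x) <= 2 * x by rewrite ler_pdivrMr //; nra.
  apply: (le_trans (y := expR (- (x / (1 - x))))); first by rewrite ler_expR lerN2.
  rewrite expRN -[leRHS]invrK lef_pV2 ?posrE ?expR_gt0 ?invr_gt0 //.
  by rewrite [leLHS](_ : _ = 1 + x / (1 - x)) ?expR_ge1Dx //; field; lra.
rewrite (mulrC 2) -mulrA -mulrN expRM_natl; apply: lerXn2r => //; rewrite nnegrE ?expR_ge0 //; lra.
Qed.

Lemma mulr_expRN_le_inv x y : 0 < y -> x * expR (- (y * x)) <= y^-1.
Proof.
move=> y_gt0; have := expR_ge1Dx (y * x).
rewrite expRN ler_pdivrMr ?expR_gt0 // ler_pdivlMl //; nra.
Qed.

Lemma le0_ger_powR r x y : r <= 0 -> 0 < x -> x <= y -> y `^ r <= x `^ r.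
Proof.
move=> r_le0 x_gt0 xy; have y_gt0 := lt_le_trans x_gt0 xy.
rewrite -[r]opprK !(powRN _ (- r)) lef_pV2 ?posrE ?powR_gt0 //.
by apply: ge0_ler_powR; rewrite ?nnegrE ?oppr_ge0 ?(ltW x_gt0) ?(ltW y_gt0).
Qed.

Lemma sum_indicator a b K x : (b <= K)%N ->
  \sum_(i < K) (if (a <= i < b)%N then x else 0) = (b - a)%:R * x.
Proof.
move=> bK; transitivity (\sum_(a <= i < b) x); last by rewrite sumr_const_nat mulr_natl.
by rewrite big_geq_mkord (big_ord_widen_cond _ _ _ bK) [RHS]big_mkcond.
Qed.

Lemma ln_prod (I : Type) (s : seq I) (F : I -> R) : (forall i, 0 < F i) ->
  ln (\prod_(i <- s) F i) = \sum_(i <- s) ln (F i).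
Proof.
move=> F_gt0.
suff [] : 0 < \prod_(i <- s) F i /\ ln (\prod_(i <- s) F i) = \sum_(i <- s) ln (F i) by [].
apply: (big_ind2 (fun x t => 0 < x /\ ln x = t)); first by rewrite ln1.
  by move=> x t y u [x_gt0 <-] [y_gt0 <-]; rewrite mulr_gt0 // lnM.
by move=> i _; rewrite F_gt0.
Qed.

(* The sum is [ln (m ^ m / m!)], and [m ^ m / m!] is a term of the exponential series of [m]. *)
Lemma sum_ln_div_le m : \sum_(i < m) ln (m%:R / i.+1%:R : R) <= m%:R.
Proof.
case: m => [|m]; first by rewrite big_ord0.
have prod_succ n : \prod_(i < n) i.+1 = n`!.
  by elim: n => [|n IHn]; rewrite ?big_ord0 // big_ord_recr IHn factS mulnC.
rewrite -ln_prod => [|i]; last by rewrite divr_gt0 ?ltr0n.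
rewrite prodf_div prodr_const card_ord -natr_prod prod_succ.
rewrite -ler_expR lnK ?posrE ?divr_gt0 ?exprn_gt0 ?ltr0n ?fact_gt0 //.
by apply: le_trans (expR_ge1Dxn m (ler0n _ _)); rewrite lerDr.
Qed.

Lemma le_natr_minn (x : R) m n : x <= m%:R -> x <= n%:R -> x <= (minn m n)%:R.
Proof. by move=> xm xn; case: (leqP m n). Qed.

Lemma powR_le_linear_eventually (a d e : R) : 0 <= a < 1 -> 0 <= d -> 0 < e ->
  \forall N \near \oo, d * N%:R `^ a <= e * N%:R.
Proof.
move=> /andP[a_ge0 a_lt1] d_ge0 e_gt0; have a1_gt0 : 0 < 1 - a by lra.
near=> N.
have N_ge1 : 1 <= N%:R :> R by near: N; apply: nbhs_infty_ger.
have N_large : (d / e) `^ (1 - a)^-1 <= N%:R by near: N; apply: nbhs_infty_ger.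
have de_le : d / e <= N%:R `^ (1 - a).
  have -> : d / e = ((d / e) `^ (1 - a)^-1) `^ (1 - a).
    by rewrite -powRrM mulVf ?powRr1 ?divr_ge0 ?(ltW e_gt0) // lt0r_neq0.
  by apply: ge0_ler_powR; rewrite ?nnegrE ?powR_ge0 //; lra.
have N_split : N%:R = N%:R `^ (1 - a) * N%:R `^ a :> R.
  by rewrite -powRD ?subrK ?powRr1 ?oner_eq0.
by rewrite {2}N_split mulrA ler_wpM2r ?powR_ge0 // -ler_pdivrMl // mulrC.
Unshelve. all: by end_near.
Qed.

End RealFacts.

Section PowerTail.
Variable R : realType.
Implicit Types (alpha : R) (i m n : nat).

(* Convexity of [expR]: [u `^ (1 - alpha) >= 1 + (alpha - 1) (1 - u)] at [u = i / (i + 1)]. *)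
Lemma powR_decrement_ge alpha i : 1 < alpha -> (1 <= i)%N ->
  (alpha - 1) * i.+1%:R `^ (- alpha) <= i%:R `^ (1 - alpha) - i.+1%:R `^ (1 - alpha).
Proof.
move=> alpha_gt1 i_ge1; set x : R := i.+1%:R; set u := i%:R / x.
have x_gt0 : 0 < x by rewrite ltr0n.
have u_gt0 : 0 < u by rewrite divr_gt0 ?ltr0n.
have onemu : 1 - u = x^-1 by rewrite /u /x -natr1; field; rewrite natr1 pnatr_eq0.
have ln_u : ln u <= u - 1.
  by have := @le_ln1Dx R (u - 1); rewrite subrKC; apply; lra.
have u_pow : 1 + (alpha - 1) * x^-1 <= u `^ (1 - alpha).
  rewrite /powR gt_eqF //; apply: le_trans (expR_ge1Dx _); rewrite -onemu lerD2l.
  have : 0 <= (alpha - 1) * (u - 1 - ln u) by apply: mulr_ge0; lra.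
  nra.
have -> : i%:R = u * x by rewrite /u divfK // gt_eqF.
have -> : x `^ (- alpha) = x `^ (1 - alpha) * x^-1.
  rewrite -powR_inv1 ?(ltW x_gt0) // -powRD; last by rewrite (gt_eqF x_gt0) implybT.
  by rewrite addrAC subrr add0r.
rewrite powRM ?(ltW u_gt0) ?(ltW x_gt0) // lerBrDr.
have -> : (alpha - 1) * (x `^ (1 - alpha) / x) + x `^ (1 - alpha)
          = (1 + (alpha - 1) * x^-1) * x `^ (1 - alpha) by ring.
by rewrite ler_wpM2r ?powR_ge0.
Qed.

Lemma sum_powR_tail_le alpha m n : 1 < alpha -> (1 <= m)%N ->
  \sum_(m <= i < n) i.+1%:R `^ (- alpha) <= m%:R `^ (1 - alpha) / (alpha - 1).
Proof.
move=> alpha_gt1 m_ge1; have alpha1_gt0 : 0 < alpha - 1 by lra.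
rewrite ler_pdivlMr // mulr_suml.
have [nm | mn] := leqP n m; first by rewrite big_geq // powR_ge0.
apply: (le_trans (y := \sum_(m <= i < n) (i%:R `^ (1 - alpha) - i.+1%:R `^ (1 - alpha)))).
  apply: ler_sum_nat => i /andP[mi _]; rewrite mulrC.
  exact: powR_decrement_ge (leq_trans m_ge1 mi).
have := telescope_sumr (fun k => - (k%:R `^ (1 - alpha) : R)) (ltnW mn).
under eq_bigr do rewrite opprK addrC.
by move=> ->; rewrite opprK addrC lerBlDr lerDl powR_ge0.
Qed.

Lemma sum_head_tail_le alpha m K (a C : R) : 1 < alpha -> (1 <= m)%N -> 0 <= a -> 0 <= C ->
  \sum_(i < K) (if (i < m)%N then a else C * i.+1%:R `^ (- alpha))
    <= m%:R * a + C * (m%:R `^ (1 - alpha) / (alpha - 1)).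
Proof.
move=> alpha_gt1 m_ge1 a_ge0 C_ge0.
set h := fun i : nat => if (i < m)%N then a else C * i.+1%:R `^ (- alpha).
have h_ge0 i : 0 <= h i by rewrite /h; case: ifP; rewrite ?mulr_ge0 ?powR_ge0.
rewrite -(big_mkord xpredT h).
apply: (le_trans (y := \sum_(0 <= i < m + K) h i)).
  by rewrite (@big_cat_nat _ _ _ K 0 (m + K)) ?leq_addl //= lerDl sumr_ge0.
rewrite (@big_cat_nat _ _ _ m 0 (m + K)) ?leq_addr //=; apply: lerD.
  rewrite (eq_big_nat _ _ (F2 := fun=> a)) ?sumr_const_nat ?subn0 ?mulr_natl //.
  by move=> i /andP[_ im]; rewrite /h im.
rewrite (eq_big_nat _ _ (F2 := fun i => C * i.+1%:R `^ (- alpha))); last first.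
  by move=> i /andP[mi _]; rewrite /h ltnNge mi.
by rewrite -mulr_sumr ler_wpM2l // sum_powR_tail_le.
Qed.
End PowerTail.

Section Simplex.
Variables (R : realType) (K : nat).
Implicit Types (p q b : 'I_K -> R) (N : nat).

Lemma simplex_le1 q i : simplex q -> q i <= 1.
Proof. by case=> q_ge0 <-; rewrite (bigD1 i) //= lerDl sumr_ge0. Qed.

Lemma onemX_simplex_ge0 q i N : simplex q -> 0 <= (1 - q i) ^+ N.
Proof. by move=> q_simplex; rewrite exprn_ge0 // subr_ge0 simplex_le1. Qed.

Lemma onemX_simplex_le1 q i N : simplex q -> (1 - q i) ^+ N <= 1.
Proof.
move=> q_simplex; have [q_ge0 _] := q_simplex.
by rewrite exprn_ile1 ?subr_ge0 ?simplex_le1 // lerBlDr lerDl.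
Qed.

Lemma simplex_above b : (0 < K)%N -> (forall i, 0 <= b i) -> \sum_i b i <= 1 ->
  exists2 q, simplex q & forall i, b i <= q i.
Proof.
move=> K_gt0 b_ge0 sum_le1; pose i0 := Ordinal K_gt0.
exists (fun i => b i + if i == i0 then 1 - \sum_j b j else 0).
  split=> [i|]; first by case: eqP; rewrite addr_ge0 ?subr_ge0.
  by rewrite big_split /= -big_mkcond big_pred1_eq addrC subrK.
by move=> i; case: eqP; rewrite lerDl ?subr_ge0.
Qed.

Lemma LN_ge0 N p q : simplex p -> simplex q -> 0 <= LN N p q.
Proof.
move=> [p_ge0 _] q_simplex; apply: sumr_ge0 => i _.
by rewrite mulr_ge0 ?onemX_simplex_ge0.
Qed.

Lemma Lstar_le_LN N p q : simplex p -> simplex q -> Lstar N p <= LN N p q.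
Proof.
move=> p_simplex q_simplex; apply: ge_inf; last by exists q.
by exists 0 => _ [r r_simplex <-]; apply: LN_ge0.
Qed.

Lemma le_Lstar N p a : simplex p ->
  (forall q, simplex q -> a <= LN N p q) -> a <= Lstar N p.
Proof.
move=> p_simplex LN_ge; apply: lb_le_inf; first by exists (LN N p p), p.
by move=> _ [q q_simplex <-]; apply: LN_ge.
Qed.

End Simplex.

Section Memorization.
Variable R : realType.
Implicit Types (alpha c C k : R) (N K m M : nat).

Lemma Lsame_upper alpha C N K (p : 'I_K -> R) : 1 < alpha -> 0 <= C -> (1 <= N)%N ->
  simplex p -> (forall i, p i <= C * i.+1%:R `^ (- alpha)) ->
  Lsame N p <= (1 + C * 2 `^ (alpha - 1) / (alpha - 1)) * N%:R `^ (-1 + alpha^-1).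
Proof.
move=> alpha_gt1 C_ge0 N_ge1 p_simplex p_le; have [p_ge0 _] := p_simplex.
set n : R := N%:R; have n_gt0 : 0 < n by rewrite ltr0n.
have alpha_inv_ge0 : 0 <= alpha^-1 by rewrite invr_ge0; lra.
set s := n `^ alpha^-1; set m := Num.truncn s.
have s_ge1 : 1 <= s by rewrite -(powRr0 n) ler_powR // ler1n.
have m_ge1 : (1 <= m)%N by rewrite truncn_gt0.
have m_le_s : m%:R <= s by rewrite truncn_le; lra.
have s_lt_m1 := truncnS_gt s; rewrite -/m -natr1 in s_lt_m1.
set X := n `^ (-1 + alpha^-1).
have X_eq : X = n^-1 * s.
  by rewrite /X powRD ?powR_inv1 ?(gt_eqF n_gt0) ?implybT // ltW.
have sX : s `^ (1 - alpha) = X.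
  by rewrite -powRrM /X; congr (_ `^ _); field; lra.
apply: (le_trans (y := \sum_(i < K) if (i < m)%N then n^-1 else C * i.+1%:R `^ (- alpha))).
  apply: ler_sum => i _; case: ifP => _.
    apply: le_trans (mulr_expRN_le_inv (p i) n_gt0).
    by rewrite ler_wpM2l // onemX_le_expR // simplex_le1.
  by apply: le_trans (p_le i); rewrite ler_piMr ?onemX_simplex_le1.
have n_inv_ge0 : 0 <= n^-1 by rewrite invr_ge0 ltW.
apply: le_trans (sum_head_tail_le K alpha_gt1 m_ge1 n_inv_ge0 C_ge0) _.
have head : m%:R * n^-1 <= X by rewrite X_eq mulrC ler_wpM2l // invr_ge0 ltW.
have tail : m%:R `^ (1 - alpha) <= 2 `^ (alpha - 1) * X.
  apply: (le_trans (y := (s / 2) `^ (1 - alpha))).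
    have m_ge1r : 1 <= m%:R :> R by rewrite ler1n.
    by apply: le0_ger_powR; lra.
  rewrite powRM ?invr_ge0 ?ler0n //; last lra.
  by rewrite -powR_inv1 // -powRrM mulN1r opprB sX mulrC.
have alpha1_gt0 : 0 < alpha - 1 by lra.
rewrite mulrDl mul1r lerD //.
have -> : C * 2 `^ (alpha - 1) / (alpha - 1) * X = C * (2 `^ (alpha - 1) * X / (alpha - 1)) by ring.
by rewrite ler_wpM2l // ler_pM2r ?invr_gt0.
Qed.

Lemma Lsame_lower alpha c C N K (p : 'I_K -> R) : 1 < alpha -> 0 < c -> (2 <= N)%N ->
  1 <= C * N%:R -> 4 * (C * N%:R) `^ alpha^-1 <= K%:R -> simplex p ->
  (forall i : 'I_K, c * i.+1%:R `^ (- alpha) <= p i <= C * i.+1%:R `^ (- alpha)) ->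
  c * expR (-2) * 2 `^ (1 - 2 * alpha) * (C * N%:R) `^ (-1 + alpha^-1) <= Lsame N p.
Proof.
move=> alpha_gt1 c_gt0 N_ge2 CN_ge1 K_ge p_simplex p_bound; have [p_ge0 _] := p_simplex.
set n : R := N%:R in CN_ge1 K_ge *; have n_ge2 : 2 <= n by rewrite ler_nat.
have C_gt0 : 0 < C by nra.
set t := (C * n) `^ alpha^-1 in K_ge *.
have t_ge1 : 1 <= t by rewrite -(powRr0 (C * n)) ler_powR // invr_ge0; lra.
set m := (Num.truncn t).+1.
have t_lt_m : t < m%:R by apply: truncnS_gt.
have m_le_t1 : m%:R <= t + 1 by rewrite -natr1 lerD2r truncn_le; lra.
have m_gt0 : 0 < m%:R :> R by rewrite ltr0n.
have Ct : C * t `^ (- alpha) = n^-1.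
  have alpha_neq0 : alpha != 0 by rewrite gt_eqF //; lra.
  rewrite -powRrM mulrN mulVf // powR_inv1; last lra.
  by rewrite invfM mulrA divff ?mul1r // gt_eqF.
(* On the window [m <= i < 2m] we have [p_i <= 1 / n], so each task keeps the constant
   fraction [expR (-2)] of its weight [p_i >= c (2m) `^ (- alpha)]. *)
set D := c * expR (-2) * (2 * m%:R) `^ (- alpha).
have window (i : 'I_K) : (m <= i < 2 * m)%N -> D <= p i * (1 - p i) ^+ N.
  move=> /andP[mi i2m]; have /andP[p_ge p_le] := p_bound i.
  have p_le_n : p i <= n^-1.
    apply: le_trans p_le _; rewrite -Ct ler_wpM2l ?(ltW C_gt0) //.
    apply: le0_ger_powR; [lra | lra | ].
    by apply: le_trans (ltW t_lt_m) _; rewrite ler_nat leqW.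
  rewrite /D mulrAC; apply: ler_pM; rewrite ?mulr_ge0 ?expR_ge0 ?powR_ge0 //; try lra.
    apply: le_trans p_ge; rewrite ler_pM2l // le0_ger_powR ?ltr0n //; first lra.
    by rewrite -natrM ler_nat.
  apply: le_trans (expR_le_onemX _ _); last first.
    rewrite p_ge0 /= (le_trans p_le_n) // lef_pV2 ?posrE; lra.
  rewrite ler_expR lerN2 -/n -mulrA.
  have : n * p i <= 1 by rewrite -ler_pdivlMl ?div1r //; lra.
  lra.
apply: (le_trans (y := \sum_(i < K) if (m <= i < 2 * m)%N then D else 0)); last first.
  apply: ler_sum => i _; case: ifP => [/window // | _].
  by rewrite mulr_ge0 ?onemX_simplex_ge0.
have m2K : (2 * m <= K)%N by rewrite -(ler_nat R) natrM; lra.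
rewrite sum_indicator // mul2n -addnn addnK.
have two_pow : 2 `^ (1 - 2 * alpha) = 2 `^ (- alpha) * 2 `^ (1 - alpha) :> R.
  by rewrite -powRD ?pnatr_eq0 ?implybT //; congr (_ `^ _); ring.
have t_pow : t `^ (1 - alpha) = (C * n) `^ (-1 + alpha^-1).
  by rewrite -powRrM; congr (_ `^ _); field; lra.
have mD : m%:R * D = c * expR (-2) * 2 `^ (- alpha) * m%:R `^ (1 - alpha).
  rewrite /D powRM ?ler0n // (addrC 1) powRD; last by rewrite pnatr_eq0 implybT.
  by rewrite powRr1 ?ler0n //; ring.
have -> : c * expR (-2) * 2 `^ (1 - 2 * alpha) * (C * n) `^ (-1 + alpha^-1)
        = c * expR (-2) * 2 `^ (- alpha) * (2 * t) `^ (1 - alpha).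
  by rewrite two_pow (@powRM _ 2 t) ?t_pow; [ring | lra | lra].
rewrite mD ler_wpM2l ?mulr_ge0 ?expR_ge0 ?powR_ge0 //; try lra.
apply: le0_ger_powR; lra.
Qed.

Lemma Lstar_upper alpha C N K m (p : 'I_K -> R) : 1 < alpha -> 0 <= C -> (1 <= m <= K)%N ->
  alpha * m%:R <= N%:R -> simplex p -> (forall i, p i <= C * i.+1%:R `^ (- alpha)) ->
  Lstar N p <= C * alpha / (alpha - 1) * m%:R `^ (1 - alpha).
Proof.
move=> alpha_gt1 C_ge0 /andP[m_ge1 mK] amN p_simplex p_le; have [p_ge0 _] := p_simplex.
set n : R := N%:R in amN *.
have m_gt0 : 0 < m%:R :> R by rewrite ltr0n.
have n_gt0 : 0 < n by apply: lt_le_trans amN; rewrite mulr_gt0 //; lra.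
(* Spending [alpha / n * ln (m / (i + 1))] on each of the [m] most frequent tasks levels
   their losses [p_i * exp (- n * q_i)] down to [C * m `^ (- alpha)]. *)
pose b i : R := if (i < m)%N then alpha / n * ln (m%:R / i.+1%:R) else 0.
have b_ge0 i : 0 <= b i.
  rewrite /b; case: ifP => // im; rewrite mulr_ge0 ?divr_ge0 ?ln_ge0 //; try lra.
  by rewrite ler_pdivlMr ?ltr0n // mul1r ler_nat.
have sum_b : \sum_(i < K) b i <= 1.
  rewrite /b -big_mkcond /= -(big_ord_widen _ (fun i => alpha / n * ln (m%:R / i.+1%:R)) mK).
  rewrite -mulr_sumr; apply: le_trans (ler_wpM2l _ (sum_ln_div_le _ m)) _.
    by rewrite divr_ge0 //; lra.
  by rewrite mulrAC ler_pdivrMr // mul1r.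
have [q q_simplex b_le_q] := simplex_above (leq_trans m_ge1 mK) (fun i => b_ge0 i) sum_b.
apply: le_trans (Lstar_le_LN _ p_simplex q_simplex) _.
apply: (le_trans (y := \sum_(i < K) if (i < m)%N then C * m%:R `^ (- alpha)
                                   else C * i.+1%:R `^ (- alpha))).
  apply: ler_sum => i _; case: ifP => im; last first.
    by apply: le_trans (p_le i); rewrite ler_piMr ?onemX_simplex_le1.
  have i_gt0 : 0 < i.+1%:R :> R by rewrite ltr0n.
  have expR_b : expR (- (n * b i)) = (m%:R / i.+1%:R) `^ (- alpha).
    rewrite /b im (_ : - _ = ln (m%:R / i.+1%:R) * - alpha); last by field; exact: lt0r_neq0.
    by rewrite expRM lnK // posrE divr_gt0.
  apply: (le_trans (y := p i * expR (- (n * b i)))).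
    rewrite ler_wpM2l //; apply: le_trans (onemX_le_expR _ (simplex_le1 _ q_simplex)) _.
    by rewrite ler_expR lerN2 ler_wpM2l ?(ltW n_gt0) ?b_le_q.
  rewrite expR_b; apply: le_trans (ler_wpM2r (powR_ge0 _ _) (p_le i)) _.
  by rewrite -mulrA -powRM ?(ltW i_gt0) ?divr_ge0 // [i.+1%:R * _]mulrC divfK ?gt_eqF.
have head_ge0 : 0 <= C * m%:R `^ (- alpha) by rewrite mulr_ge0 ?powR_ge0.
apply: le_trans (sum_head_tail_le K alpha_gt1 m_ge1 head_ge0 C_ge0) _.
have alpha1_neq0 : alpha - 1 != 0 by rewrite subr_eq0 gt_eqF.
have mm : m%:R * m%:R `^ (- alpha) = m%:R `^ (1 - alpha).
  rewrite [RHS]powRD ?powRr1 ?ler0n //.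
  by rewrite pnatr_eq0 -lt0n m_ge1 implybT.
rewrite mulrCA mm.
have -> : C * alpha / (alpha - 1) * m%:R `^ (1 - alpha)
        = C * m%:R `^ (1 - alpha) + C * (m%:R `^ (1 - alpha) / (alpha - 1)) by field.
exact: lexx.
Qed.

Lemma Lstar_lower alpha c k N K M (p : 'I_K -> R) : 1 < alpha -> 0 < c -> 0 < k ->
  (4 <= M)%N -> (M <= K)%N -> (M <= N)%N -> k * N%:R <= M%:R -> simplex p ->
  (forall i : 'I_K, c * i.+1%:R `^ (- alpha) <= p i) ->
  c / 2 * expR (- (4 / k)) * N%:R `^ (1 - alpha) <= Lstar N p.
Proof.
move=> alpha_gt1 c_gt0 k_gt0 M_ge4 MK MN kNM p_simplex p_ge.
apply: le_Lstar => // q q_simplex; have [p_ge0 _] := p_simplex; have [q_ge0 q_sum] := q_simplex.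
set n : R := N%:R in kNM *; set Mr : R := M%:R in kNM *.
have Mr_ge4 : 4 <= Mr by rewrite ler_nat.
have Mr_le_n : Mr <= n by rewrite ler_nat.
set E := expR (- (4 / k)); have E_ge0 : 0 <= E := expR_ge0 _.
set D := c * E * Mr `^ (- alpha).
have D_ge0 : 0 <= D by rewrite mulr_ge0 ?powR_ge0 // mulr_ge0 // ltW.
(* A task with [q_i <= 2 / M] keeps a loss of at least [D]; on the others the
   linear penalty [D * M / 2 * q_i] already exceeds [D]. *)
have term_ge (i : 'I_K) :
    (if (i < M)%N then D else 0) - D * Mr / 2 * q i <= p i * (1 - q i) ^+ N.
  have loss_ge0 : 0 <= p i * (1 - q i) ^+ N.
    by rewrite mulr_ge0 ?onemX_simplex_ge0.
  have penalty_ge0 : 0 <= D * Mr / 2 * q i.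
    by apply: mulr_ge0 (q_ge0 i); apply: divr_ge0; [apply: mulr_ge0 | ]; lra.
  case: ifP => iM; last by apply: le_trans _ loss_ge0; lra.
  have [qi_small | qi_large] := leP (q i) (2 / Mr); last first.
    have q_half_M_ge1 : 1 <= q i * (Mr / 2).
      by rewrite -ler_pdivrMr ?div1r ?invf_div ?(ltW qi_large) //; lra.
    apply: le_trans _ loss_ge0; rewrite subr_le0.
    by rewrite -{1}[D]mulr1 (_ : D * Mr / 2 * q i = D * (q i * (Mr / 2))) ?ler_wpM2l //; ring.
  apply: (le_trans (y := D)); first by lra.
  rewrite /D mulrAC; apply: ler_pM; rewrite ?mulr_ge0 ?powR_ge0 //; try lra.
    apply: le_trans (p_ge i); rewrite ler_pM2l //.
    by apply: le0_ger_powR; [lra | rewrite ltr0n | rewrite ler_nat].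
  apply: le_trans (expR_le_onemX _ _); last first.
    rewrite q_ge0 /= (le_trans qi_small) // ler_pdivrMr; lra.
  have qM : q i * Mr <= 2 by rewrite -ler_pdivlMr //; lra.
  rewrite ler_expR lerN2 -/n ler_pdivlMr //.
  have := q_ge0 i; nra.
apply: (le_trans (y := \sum_(i < K) ((if (i < M)%N then D else 0) - D * Mr / 2 * q i)));
  last by apply: ler_sum => i _; apply: term_ge.
rewrite sumrB (sum_indicator 0) // subn0 -mulr_sumr q_sum mulr1.
have MD : Mr * D = c * E * Mr `^ (1 - alpha).
  have Mr_gt0 : 0 < Mr by lra.
  rewrite /D (addrC 1) powRD; last by rewrite (gt_eqF Mr_gt0) implybT.
  by rewrite powRr1 ?ler0n //; ring.
rewrite (_ : Mr * D - D * Mr / 2 = Mr * D / 2); last first.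
  by rewrite [D * Mr]mulrC {1}(splitr (Mr * D)) addrK.
rewrite MD (_ : c / 2 * E * n `^ _ = c * E * n `^ (1 - alpha) / 2); last by ring.
rewrite ler_pM2r // ler_wpM2l ?mulr_ge0 ?(ltW c_gt0) //.
by apply: le0_ger_powR; lra.
Qed.

End Memorization.

Section Asymptotics.
Variables (R : realType) (alpha c C c0 : R).

Definition zipf_eventually (P : forall N K : nat, ('I_K -> R) -> Prop) : Prop :=
  \forall N \near \oo, forall K (p : 'I_K -> R), c0 * N%:R <= K%:R -> simplex p ->
    (forall i : 'I_K, c * i.+1%:R `^ (- alpha) <= p i <= C * i.+1%:R `^ (- alpha)) ->
    P N K p.

Lemma Lsame_upper_eventually : 1 < alpha -> 0 < c -> c <= C ->
  exists2 B, 0 < B & zipf_eventually (fun N K p => Lsame N p <= B * N%:R `^ (-1 + alpha^-1)).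
Proof.
move=> alpha_gt1 c_gt0 c_le_C; have C_ge0 : 0 <= C by lra.
exists (1 + C * 2 `^ (alpha - 1) / (alpha - 1)).
  have : 0 <= C * 2 `^ (alpha - 1) / (alpha - 1) by rewrite divr_ge0 ?mulr_ge0 ?powR_ge0 //; lra.
  lra.
rewrite /zipf_eventually; near=> N => K p _ p_simplex p_bound.
apply: Lsame_upper => // [|i]; last by case/andP: (p_bound i).
by near: N; apply: nbhs_infty_ge.
Unshelve. all: by end_near.
Qed.

Lemma Lsame_lower_eventually : 1 < alpha -> 0 < c -> c <= C -> 0 < c0 ->
  exists2 A, 0 < A & zipf_eventually (fun N K p => A * N%:R `^ (-1 + alpha^-1) <= Lsame N p).
Proof.
move=> alpha_gt1 c_gt0 c_le_C c0_gt0; have C_gt0 : 0 < C by lra.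
exists (c * expR (-2) * 2 `^ (1 - 2 * alpha) * C `^ (-1 + alpha^-1)).
  by rewrite !mulr_gt0 ?expR_gt0 ?powR_gt0.
rewrite /zipf_eventually; near=> N => K p K_ge p_simplex p_bound.
have N_ge2 : (2 <= N)%N by near: N; apply: nbhs_infty_ge.
have CN_ge1 : 1 <= C * N%:R.
  have N_ge : C^-1 <= N%:R by near: N; apply: nbhs_infty_ger.
  by rewrite -ler_pdivrMl // mulr1.
have K_large : 4 * (C * N%:R) `^ alpha^-1 <= K%:R.
  apply: le_trans K_ge; rewrite powRM ?ler0n ?(ltW C_gt0) // mulrA.
  near: N; apply: powR_le_linear_eventually => //; last by rewrite mulr_ge0 ?powR_ge0.
  by rewrite invr_ge0 invf_lt1 /=; lra.
rewrite -[_ * C `^ _ * _]mulrA -(powRM _ (ltW C_gt0) (ler0n _ N)).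
exact: Lsame_lower.
Unshelve. all: by end_near.
Qed.

Lemma Lstar_upper_eventually : 1 < alpha -> 0 < c -> c <= C -> 0 < c0 ->
  exists2 B, 0 < B & zipf_eventually (fun N K p => Lstar N p <= B * N%:R `^ (1 - alpha)).
Proof.
move=> alpha_gt1 c_gt0 c_le_C c0_gt0; have C_gt0 : 0 < C by lra.
set k := Num.min c0 (2 * alpha)^-1.
have k_gt0 : 0 < k by rewrite lt_min c0_gt0 invr_gt0 /=; lra.
exists (C * alpha / (alpha - 1) * k `^ (1 - alpha)).
  by rewrite !mulr_gt0 ?powR_gt0 ?invr_gt0 //; lra.
rewrite /zipf_eventually; near=> N => K p K_ge p_simplex p_bound.
have N_large : 2 * alpha <= N%:R by near: N; apply: nbhs_infty_ger.
have Na_ge0 : 0 <= N%:R / alpha by rewrite divr_ge0 //; lra.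
set m := minn K (Num.truncn (N%:R / alpha)).
have km : k * N%:R <= m%:R.
  apply: le_natr_minn; first by apply: le_trans K_ge; rewrite ler_wpM2r ?ge_min ?lexx.
  have := truncnS_gt (N%:R / alpha); rewrite -natr1.
  have : k * N%:R <= N%:R / alpha / 2.
    rewrite (_ : _ / 2 = (2 * alpha)^-1 * N%:R); last by field; apply: lt0r_neq0; lra.
    by rewrite ler_wpM2r ?ge_min ?lexx ?orbT.
  have : 2 <= N%:R / alpha by rewrite ler_pdivlMr //; lra.
  lra.
have N_gt0 : 0 < N%:R :> R by lra.
have m_ge1 : (1 <= m)%N.
  by rewrite -(ltr_nat R) (lt_le_trans _ km) // mulr_gt0.
have am : alpha * m%:R <= N%:R.
  rewrite mulrC -ler_pdivlMr; last lra.
  apply: (le_trans (y := (Num.truncn (N%:R / alpha))%:R)); last by rewrite truncn_le.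
  by rewrite ler_nat geq_minr.
apply: le_trans (Lstar_upper (m := m) alpha_gt1 (ltW C_gt0) _ am p_simplex _) _.
- by rewrite m_ge1 geq_minl.
- by move=> i; case/andP: (p_bound i).
rewrite -[_ * k `^ _ * _]mulrA -(powRM _ (ltW k_gt0) (ler0n _ N)).
rewrite ler_wpM2l ?mulr_ge0 ?invr_ge0; try lra.
by apply: (le0_ger_powR _ (mulr_gt0 k_gt0 N_gt0) km); lra.
Unshelve. all: by end_near.
Qed.

Lemma Lstar_lower_eventually : 1 < alpha -> 0 < c -> 0 < c0 ->
  exists2 A, 0 < A & zipf_eventually (fun N K p => A * N%:R `^ (1 - alpha) <= Lstar N p).
Proof.
move=> alpha_gt1 c_gt0 c0_gt0.
set k := Num.min c0 1; have k_gt0 : 0 < k by rewrite lt_min c0_gt0 ltr01.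
exists (c / 2 * expR (- (4 / k))); first by rewrite mulr_gt0 ?expR_gt0 ?divr_gt0.
rewrite /zipf_eventually; near=> N => K p K_ge p_simplex p_bound.
have N_large : 4 / k <= N%:R by near: N; apply: nbhs_infty_ger.
have kM : k * N%:R <= (minn K N)%:R.
  apply: le_natr_minn; first by apply: le_trans K_ge; rewrite ler_wpM2r ?ge_min ?lexx.
  by rewrite ler_piMl ?ler0n // ge_min lexx orbT.
apply: (Lstar_lower (M := minn K N)) => //; first 2 [exact: geq_minl | exact: geq_minr].
- by rewrite -(ler_nat R); apply: le_trans kM; rewrite -ler_pdivrMl // mulrC.
- by move=> i; case/andP: (p_bound i).
Unshelve. all: by end_near.
Qed.

End Asymptotics.

Theorem corollary4p3 (R : realType) (alpha c C c0 : R) :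
  1 < alpha -> 0 < c -> c <= C -> 0 < c0 ->
  exists (A1 B1 A2 B2 : R) (N0 : nat),
    [/\ 0 < A1, 0 < B1, 0 < A2 & 0 < B2] /\
    forall (N K : nat) (p : 'I_K -> R),
      (2 <= N)%N -> (N0 <= N)%N ->
      c0 * N%:R <= K%:R ->
      @simplex R K p ->
      (forall i : 'I_K,
          c * (i.+1%:R) `^ (- alpha) <= p i <= C * (i.+1%:R) `^ (- alpha)) ->
      (A1 * N%:R `^ (-1 + alpha^-1) <= Lsame N p <= B1 * N%:R `^ (-1 + alpha^-1))
      /\ (A2 * N%:R `^ (1 - alpha) <= Lstar N p <= B2 * N%:R `^ (1 - alpha)).
Proof.
move=> alpha_gt1 c_gt0 c_le_C c0_gt0.
have [A1 A1_gt0 Lsame_ge] := Lsame_lower_eventually alpha_gt1 c_gt0 c_le_C c0_gt0.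
have [B1 B1_gt0 Lsame_le] := Lsame_upper_eventually c0 alpha_gt1 c_gt0 c_le_C.
have [A2 A2_gt0 Lstar_ge] := Lstar_lower_eventually C alpha_gt1 c_gt0 c0_gt0.
have [B2 B2_gt0 Lstar_le] := Lstar_upper_eventually alpha_gt1 c_gt0 c_le_C c0_gt0.
have [N0 _ large] := filterI (filterI Lsame_ge Lsame_le) (filterI Lstar_ge Lstar_le).
exists A1, B1, A2, B2, N0; split=> // N K p _ N0N K_ge p_simplex p_bound.
have [[ge1 le1] [ge2 le2]] := large N N0N.
by split; apply/andP; split; [apply: ge1 | apply: le1 | apply: ge2 | apply: le2].
Qed.
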